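(* Let $\pi_1,\pi_2\in\mathfrak{S}_m$ and suppose that no $i\in\{1,\dots,m\}$ is fixed by exactly one of $\pi_1,\pi_2$. Then $$d_{trans}(\pi_1,\pi_2)=N(G_{\pi_1},G_{\pi_2}^{-1})-A(G_{\pi_1},G_{\pi_2}^{-1}),$$ where $N(G_{\pi_1},G_{\pi_2}^{-1})$ is the number of non-isolated nodes of the multigraph $G_{\pi_1}+G_{\pi_2}^{-1}$ and $A(G_{\pi_1},G_{\pi_2}^{-1})$ is the number of alternating cycles in $G_{\pi_1}+G_{\pi_2}^{-1}$.
   Context: $\mathfrak{S}_m$ is the symmetric group on $\{1,\dots,m\}$; permutations are composed right to left. For $\pi_1,\pi_2\in\mathfrak{S}_m$, $d_{trans}(\pi_1,\pi_2)$ is the least number of transpositions whose product equals $\pi_2^{-1}\pi_1$ (zero if this is the identity). For $\pi\in\mathfrak{S}_m$, $G_\pi$ is the directed graph on $\{1,\dots,m\}$ with arc set $Q_\pi=\{(i,j): i\ne j,\ \pi(i)=j\}$, and $G_\pi^{-1}$ is the graph with all arcs reversed (arc set $Q_\pi^{-1}$). $G_{\pi_1}+G_{\pi_2}^{-1}$ is the directed multigraph on $\{1,\dots,m\}$ with red arcs $Q_{\pi_1}$ and blue arcs $Q_{\pi_2}^{-1}$ (a red and a blue arc with the same endpoints are distinct arcs). A node is isolated if it is incident to no arc. An alternating cycle is a closed directed trail (no arc repeated) in this multigraph in which consecutive arcs, including the last and the first, have different colors, considered up to cyclic rotation. *)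

From mathcomp Require Import all_boot fingroup perm.
From mathcomp Require Import ssralg ssrint.
Set Implicit Arguments. Unset Strict Implicit. Unset Printing Implicit Defensive.

(* The ground set {1,..,m} is represented by 'I_m
   (= {0,..,m-1}); S_m is 'S_m = {perm 'I_m}.
   MathComp composes permutations left to right: (s * t) x = t (s x).
   Hence the paper's right-to-left composition f o g is the MathComp
   product g * f. *)

Section Defs.
Variable m : nat.
Implicit Types (p : 'S_m) (i j : 'I_m).

Definition rl_comp (f g : 'S_m) : 'S_m := (g * f)%g.

Definition rl_prod_tperm (ts : seq ('I_m * 'I_m)) : 'S_m :=
  foldr (fun t acc => rl_comp (tperm t.1 t.2) acc) 1%g ts.

Definition is_trans_fact (s : 'S_m) (k : nat) : bool :=
  [exists ts : k.-tuple ('I_m * 'I_m),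
     all (fun t => t.1 != t.2) ts && (rl_prod_tperm ts == s)].

Lemma is_trans_fact_ex (s : 'S_m) : exists k, is_trans_fact s k.
Proof.
have [ts -> Hts] := prod_tpermP s.
exists (size (rev ts)); rewrite /is_trans_fact; apply/existsP.
exists (in_tuple (rev ts)) => /=.
apply/andP; split; first by rewrite all_rev.
apply/eqP; rewrite /rl_prod_tperm /rl_comp.
elim/last_ind: ts {Hts} => [|ts t IH] /=; first by rewrite big_nil.
by rewrite rev_rcons /= IH -cats1 big_cat big_seq1.
Qed.

Definition d_trans (p1 p2 : 'S_m) : nat :=
  ex_minn (is_trans_fact_ex (rl_comp p2^-1 p1)%g).

(* Arcs of the multigraph G_{p1} + G_{p2}^{-1}: (colour, tail, head),
   colour true = red, false = blue. *)
Definition arc := (bool * 'I_m * 'I_m)%type.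
Definition arc_col (a : arc) : bool := a.1.1.
Definition arc_tail (a : arc) : 'I_m := a.1.2.
Definition arc_head (a : arc) : 'I_m := a.2.

Definition inQ (p : 'S_m) i j : bool := (i != j) && (p i == j).

Definition is_arc (p1 p2 : 'S_m) (a : arc) : bool :=
  if arc_col a then inQ p1 (arc_tail a) (arc_head a)
  else inQ p2 (arc_head a) (arc_tail a).

Definition N_nonisolated (p1 p2 : 'S_m) : nat :=
  #|[set v : 'I_m | [exists a : arc,
       is_arc p1 p2 a && ((arc_tail a == v) || (arc_head a == v))]]|.

Definition is_alt_closed_trail (p1 p2 : 'S_m) (s : seq arc) : bool :=
  [&& s != [::], all (is_arc p1 p2) s, uniq s &
      path.cycle (fun a b => (arc_head a == arc_tail b) &&
                        (arc_col a != arc_col b)) s].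

(* all sequences of arcs of length at most #|arc| (a trail without repeated
   arcs never exceeds this length) *)
Definition short_seqs : seq (seq arc) :=
  flatten [seq [seq tval t | t <- enum {: n.-tuple arc}] | n <- iota 0 #|{: arc}|.+1].

Definition alt_trails (p1 p2 : 'S_m) : seq (seq arc) :=
  [seq s <- short_seqs | is_alt_closed_trail p1 p2 s].

Definition rot_equiv (s t : seq arc) : bool :=
  has (fun k => rot k s == t) (iota 0 (size s)).

(* A(G_{p1}, G_{p2}^{-1}) : number of alternating cycles, i.e. of
   alternating closed trails counted up to cyclic rotation (= number of
   rotation classes). *)
Definition A_altcycles (p1 p2 : 'S_m) : nat :=
  let T := alt_trails p1 p2 in
  size (undup [seq [seq u <- T | rot_equiv t u] | t <- T]).

End Defs.

(* Multiplying by a transposition changes the number of cycles of a permutation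
   by exactly one, so a product of k transpositions of {1..m} has at least m - k
   cycles, and splitting off one point at a time shows that this is attained:
   d_trans p1 p2 = m - c(sigma), where sigma = p2^-1 p1 and c counts cycles.
   When p1 and p2 move the same set M of points, the non-isolated nodes of
   G_p1 + G_p2^-1 are exactly M, and an alternating trail has no choice at any
   node: the red arc v -> p1 v is followed by the blue arc p1 v -> sigma v, which
   is followed by the red arc leaving sigma v.  Alternating cycles are therefore
   the orbits of this "next arc" bijection, and the tails of their red arcs are
   exactly the cycles of sigma inside M.  All other cycles of sigma are the
   m - |M| fixed points outside M, so d_trans = m - (A + m - N) = N - A. *)

From Pilot Require Import Defs.
From mathcomp Require Import all_boot fingroup perm.
From mathcomp Require Import ssralg ssrint.
From mathcomp Require Import zify.

Set Implicit Arguments.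
Unset Strict Implicit.
Unset Printing Implicit Defensive.

Section CycleCount.
Variable T : finType.
Implicit Types (s : {perm T}) (x y : T) (ts : seq (T * T)).

Lemma porbit_fixed s x : s x = x -> porbit s x = [set x].
Proof.
move=> sx; apply/setP => z; rewrite inE.
apply/porbitP/eqP => [[i ->]|->]; first by rewrite permX_fix.
by exists 0; rewrite expg0 perm1.
Qed.

Lemma card_porbits_le s : #|porbits s| <= #|T|.
Proof. exact: leq_imset_card. Qed.

Lemma card_porbits1 : #|porbits (1 : {perm T})| = #|T|.
Proof.
by rewrite card_imset // => x y; rewrite !porbit_fixed ?perm1 //; apply: set1_inj.
Qed.

Lemma card_porbits_mul_tperm_ge s x y :
  #|porbits s| <= (#|porbits (tperm x y * s)%g|).+1.
Proof.
have [->|nxy] := eqVneq x y; first by rewrite tperm1 mul1g.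
have := porbits_mul_tperm s x y; rewrite nxy.
by case: (_ \notin _) => /=; lia.
Qed.

Lemma card_porbits_mul_tperm_split s x : s x != x ->
  #|porbits (tperm x (s x) * s)%g| = (#|porbits s|).+1.
Proof.
move=> sx; have := porbits_mul_tperm s x (s x).
by rewrite porbit_sym -{2}[s x]/((s ^+ 1)%g x) mem_porbit eq_sym sx /= addn0 addn1.
Qed.

Lemma card_porbits_eqT s : (#|porbits s| == #|T|) = (s == 1%g).
Proof.
apply/idP/eqP => [card_s|->]; last by rewrite card_porbits1.
apply/permP => x; rewrite perm1; apply/eqP/negPn/negP => sx.
have := card_porbits_le (tperm x (s x) * s)%g.
by rewrite card_porbits_mul_tperm_split // (eqP card_s) ltnn.
Qed.

Lemma card_porbits_prod_tperm ts :
  #|T| <= #|porbits (\prod_(t <- ts) tperm t.1 t.2)| + size ts.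
Proof.
elim: ts => [|t ts IH]; first by rewrite big_nil card_porbits1 addn0.
rewrite big_cons /= addnS -addSn (leq_trans IH) // leq_add2r.
exact: card_porbits_mul_tperm_ge.
Qed.

Lemma card_porbits_fixed_out s (A : {set T}) : {in ~: A, forall x, s x = x} ->
  #|porbits s| = #|porbit s @: A| + #|~: A|.
Proof.
move=> fixed.
have -> : porbits s = porbit s @: A :|: porbit s @: ~: A.
  rewrite -imsetU setUCr; apply/setP => X.
  by apply/imsetP/imsetP => -[x _ ->]; exists x.
have inj_fixed : {in ~: A &, injective (porbit s)}.
  by move=> x y /fixed sx /fixed sy; rewrite !porbit_fixed //; apply: set1_inj.
rewrite -(card_in_imset inj_fixed); apply/eqP; rewrite (leq_card_setU _ _).2.
rewrite -setI_eq0; apply/set0Pn => -[_ /setIP[/imsetP[x xA ->] /imsetP[y yA]]].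
rewrite (porbit_fixed (fixed y yA)) => eq_xy.
have := porbit_id s x; rewrite eq_xy inE => /eqP x_y.
by rewrite inE -x_y xA in yA.
Qed.

Lemma prod_tperm_porbits s : exists ts, [/\ all (fun t => t.1 != t.2) ts,
  size ts = #|T| - #|porbits s| & s = (\prod_(t <- ts) tperm t.1 t.2)%g].
Proof.
suff: forall k s, #|porbits s| + k = #|T| -> exists ts, [/\ all (fun t => t.1 != t.2) ts,
    size ts = k & s = (\prod_(t <- ts) tperm t.1 t.2)%g].
  by apply; rewrite subnKC ?card_porbits_le.
elim=> [|k IH] {}s card_s.
  by exists [::]; split=> //; apply/eqP; rewrite big_nil -card_porbits_eqT -card_s addn0.
have [x sx] : exists x, s x != x.
  case: (pickP (fun x => s x != x)) => [x sx | fixed]; first by exists x.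
  have s1 : s = 1%g by apply/permP => x; rewrite perm1; apply/eqP/negbFE/fixed.
  by move: card_s; rewrite s1 card_porbits1; lia.
have [ts [dts size_ts def_s]] : exists ts, [/\ all (fun t => t.1 != t.2) ts,
    size ts = k & (tperm x (s x) * s)%g = (\prod_(t <- ts) tperm t.1 t.2)%g].
  by apply: IH; rewrite card_porbits_mul_tperm_split // addSnnS.
exists ((x, s x) :: ts); split; first by rewrite /= eq_sym sx.
- by rewrite /= size_ts.
- by rewrite big_cons -def_s tpermKg.
Qed.

End CycleCount.

Section TranspositionDistance.
Variable m : nat.
Implicit Types (s : 'S_m) (ts : seq ('I_m * 'I_m)).

Lemma rl_prod_tpermE ts : rl_prod_tperm ts = (\prod_(t <- rev ts) tperm t.1 t.2)%g.
Proof.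
elim: ts => [|t ts IH]; first by rewrite big_nil.
by rewrite rev_cons big_rcons -IH.
Qed.

Lemma is_trans_fact_card_porbits s k : is_trans_fact s k -> m <= #|porbits s| + k.
Proof.
case/existsP=> ts /andP[_ /eqP <-].
have := card_porbits_prod_tperm (rev ts).
by rewrite size_rev size_tuple card_ord -rl_prod_tpermE.
Qed.

Lemma is_trans_fact_porbits s : is_trans_fact s (m - #|porbits s|).
Proof.
have [ts [dts size_ts def_s]] := prod_tperm_porbits s.
have size_rev_ts : size (rev ts) == m - #|porbits s| by rewrite size_rev size_ts card_ord.
apply/existsP; exists (Tuple size_rev_ts).
by rewrite /= all_rev dts rl_prod_tpermE revK -def_s eqxx.
Qed.

Lemma d_trans_porbits (p1 p2 : 'S_m) : d_trans p1 p2 = m - #|porbits (p1 * p2^-1)%g|.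
Proof.
rewrite /d_trans /rl_comp; case: ex_minnP => k /is_trans_fact_card_porbits le_m min_k.
by apply/eqP; rewrite eqn_leq min_k ?is_trans_fact_porbits //= leq_subLR.
Qed.

End TranspositionDistance.

Lemma size_undup_map (A B C : eqType) (F : A -> B) (G : A -> C) (s : seq A) :
    {in s &, forall x y, (F x == F y) = (G x == G y)} ->
  size (undup (map F s)) = size (undup (map G s)).
Proof.
elim: s => //= x s IH eqFG.
have eqFG_s : {in s &, forall y z, (F y == F z) = (G y == G z)}.
  by move=> y z ys zs; apply: eqFG; rewrite inE ?ys ?zs orbT.
have -> : (F x \in map F s) = (G x \in map G s).
  rewrite -!has_pred1 !has_map; apply: eq_in_has => y ys /=.
  by apply: eqFG; rewrite inE ?ys ?eqxx ?orbT.
by case: (_ \in _); rewrite /= IH.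
Qed.

Lemma size_undup_classes (A B : eqType) (r : rel A) (F : A -> B) (s : seq A) :
    {in s &, forall x y, r x y = (F x == F y)} ->
  size (undup [seq [seq y <- s | r x y] | x <- s]) = size (undup (map F s)).
Proof.
move=> rF; apply: size_undup_map => x y xs ys; apply/eqP/eqP => [eq_cl | Fxy].
  have : x \in [seq z <- s | r y z] by rewrite -eq_cl mem_filter rF ?eqxx ?xs.
  by rewrite mem_filter rF // => /andP[/eqP].
by apply: eq_in_filter => z zs; rewrite !rF // Fxy.
Qed.

Lemma fcycle_rot_eq (T : finType) (f : T -> T) (s1 s2 : seq T) x :
  fcycle f s1 -> fcycle f s2 -> uniq s1 -> uniq s2 -> x \in s1 -> x \in s2 ->
  exists2 k, k < size s1 & rot k s1 = s2.
Proof.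
case: s2 => [//|y s2] f_s1 f_s2 uniq_s1 uniq_s2 x_s1 x_s2.
have y_s1 : y \in s1.
  by rewrite -(fconnect_cycle f_s1 x_s1) (fconnect_cycle f_s2 x_s2) mem_head.
exists (index y s1); first by rewrite index_mem.
by rewrite -(orbitE f_s1 uniq_s1 y_s1) (orbitE f_s2 uniq_s2 (mem_head _ _)) /= eqxx rot0.
Qed.

Section AlternatingCycles.
Variables (m : nat) (p1 p2 : 'S_m).
Hypothesis same_fixed : forall i : 'I_m, (p1 i == i) = (p2 i == i).
Local Notation arc := (Defs.arc m).
Implicit Types (a b : arc) (t u : seq arc) (v w : 'I_m).

Local Notation sigma := (p1 * p2^-1)%g.
Local Notation moved := [set v | p1 v != v].

Lemma sigmaE v : sigma v = p2^-1%g (p1 v).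
Proof. exact: permM. Qed.

Lemma same_moved v : (p1 v != v) = (p2 v != v).
Proof. by rewrite same_fixed. Qed.

Lemma same_movedV v : (p1 v != v) = (p2^-1%g v != v).
Proof. by rewrite same_moved (can2_eq (permKV p2) (permK p2)) eq_sym. Qed.

Lemma sigma_fixed_out : {in ~: moved, forall v, sigma v = v}.
Proof.
move=> v; rewrite !inE negbK => /eqP p1v.
by apply/eqP; rewrite sigmaE p1v -[_ == _]negbK -same_movedV p1v eqxx.
Qed.

Definition red_arc v : arc := (true, v, p1 v).

(* Uses [p1 v] (resp. [p2^-1 v]) instead of the head [w], so that [next_arc]
   is a bijection on all of [arc], genuine arcs or not. *)
Definition next_arc a : arc :=
  let: (c, v, w) := a in
  if c then (false, w, p2^-1%g (p1 v)) else (true, w, p1 (p2^-1%g v)).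

Definition alt_adj a b := (arc_head a == arc_tail b) && (arc_col a != arc_col b).

Definition red_tails t : {set 'I_m} := [set v | red_arc v \in t].

Lemma red_arc_inj : injective red_arc.
Proof. by move=> v w [->]. Qed.

Lemma next_arc_inj : injective next_arc.
Proof.
by move=> [[[] v w]] [[[] v' w']] //= [-> /perm_inj/perm_inj ->].
Qed.

Lemma alt_adj_next_arc a : alt_adj a (next_arc a).
Proof. by case: a => [[[] v w]]; rewrite /alt_adj /= eqxx. Qed.

Lemma alt_adj_eq_next_arc a b :
  is_arc p1 p2 a -> is_arc p1 p2 b -> alt_adj a b -> b = next_arc a.
Proof.
case: a b => [[c v w]] [[c' v' w']].
rewrite /is_arc /inQ /alt_adj /arc_col /arc_tail /arc_head /=.
case: c c' => [] [] /andP[_ /eqP <-] /andP[_ /eqP <-] /andP[/eqP vw] //= _; subst.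
  by rewrite vw permK.
by rewrite permK.
Qed.

Lemma is_arc_next_arc a : is_arc p1 p2 a -> is_arc p1 p2 (next_arc a).
Proof.
rewrite /is_arc /inQ /arc_col /arc_tail /arc_head.
case: a => [[[] v w]] /= /andP[vw /eqP def_w]; subst.
  by rewrite permKV eqxx andbT -same_movedV (inj_eq perm_inj) eq_sym.
by rewrite permK eqxx andbT eq_sym same_moved eq_sym.
Qed.

Lemma is_arc_red_arc v : is_arc p1 p2 (red_arc v) = (v \in moved).
Proof. by rewrite /is_arc /inQ /= eqxx andbT inE eq_sym. Qed.

Lemma red_arcE a : is_arc p1 p2 a -> arc_col a -> a = red_arc (arc_tail a).
Proof.
rewrite /is_arc /inQ /arc_col /arc_tail /arc_head.
by case: a => [[[] v w]] //= /andP[_ /eqP <-].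
Qed.

Lemma arc_col_next_arc a : arc_col (next_arc a) = ~~ arc_col a.
Proof. by case: a => [[[] v w]]. Qed.

Lemma arc_col_iter_next_arc n a : arc_col (iter n next_arc a) = odd n (+) arc_col a.
Proof. by elim: n => //= n IH; rewrite arc_col_next_arc IH negb_add. Qed.

Lemma iter_double_next_arc k v :
  iter k.*2 next_arc (red_arc v) = red_arc ((sigma ^+ k)%g v).
Proof.
elim: k => [|k IH]; first by rewrite expg0 perm1.
by rewrite doubleS /= IH expgSr permM sigmaE.
Qed.

Lemma fconnect_red_arc v w :
  fconnect next_arc (red_arc v) (red_arc w) = (w \in porbit sigma v).
Proof.
apply/idP/porbitP => [/iter_findex | [k ->]]; last first.
  by rewrite -iter_double_next_arc fconnect_iter.
set n := findex _ _ _ => iter_n.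
have even_n : ~~ odd n.
  by have := arc_col_iter_next_arc n (red_arc v); rewrite iter_n /= addbT => <-.
move: iter_n; rewrite -(odd_double_half n) (negbTE even_n) add0n iter_double_next_arc.
by move/red_arc_inj <-; exists n./2.
Qed.

Lemma mem_short_seqs t : uniq t -> t \in short_seqs m.
Proof.
move=> uniq_t; apply/flattenP; exists [seq tval x | x <- enum {: (size t).-tuple arc}].
  by apply/mapP; exists (size t); rewrite // mem_iota ltnS -(card_uniqP uniq_t) max_card.
by apply/mapP; exists (in_tuple t); rewrite ?mem_enum.
Qed.

Lemma mem_alt_trails t : (t \in alt_trails p1 p2) =
  [&& t != [::], all (is_arc p1 p2) t, uniq t & fcycle next_arc t].
Proof.
rewrite mem_filter.
apply/idP/idP => [/andP[/and4P[t0 arcs_t uniq_t cyc_t] _] | /and4P[t0 arcs_t uniq_t f_t]].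
  rewrite t0 arcs_t uniq_t; apply: (sub_in_cycle _ arcs_t cyc_t) => a b a_arc b_arc ab.
  by rewrite /= (alt_adj_eq_next_arc a_arc b_arc ab).
rewrite mem_short_seqs // andbT; apply/and4P; split=> //.
by apply: sub_cycle f_t => a b /eqP <-; apply: alt_adj_next_arc.
Qed.

Lemma alt_trail_red_arc t :
  t \in alt_trails p1 p2 -> exists2 v, v \in moved & red_arc v \in t.
Proof.
rewrite mem_alt_trails => /and4P[]; case: t => // a t _ /allP arcs _ f_t.
pose b := if arc_col a then a else next_arc a.
have b_t : b \in a :: t.
  by rewrite /b; case: ifP => _; [exact: mem_head | exact/(mem_fcycle f_t)/mem_head].
have b_arc : is_arc p1 p2 b.
  by rewrite /b; case: ifP => _; [exact/arcs/mem_head | exact/is_arc_next_arc/arcs/mem_head].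
have b_red : arc_col b by rewrite /b; case: ifP => // /negbT; rewrite arc_col_next_arc.
by exists (arc_tail b); rewrite -?is_arc_red_arc -red_arcE.
Qed.

Lemma red_tails_porbit t v :
  fcycle next_arc t -> red_arc v \in t -> red_tails t = porbit sigma v.
Proof.
move=> f_t vt; apply/setP => w.
by rewrite inE -fconnect_red_arc (fconnect_cycle f_t vt).
Qed.

Lemma rot_equiv_alt_trails t u : t \in alt_trails p1 p2 -> u \in alt_trails p1 p2 ->
  rot_equiv t u = (red_tails t == red_tails u).
Proof.
move=> tT uT; apply/idP/eqP => [/hasP[k _ /eqP <-] | eq_tails].
  by apply/setP => v; rewrite !inE mem_rot.
have [v _ vt] := alt_trail_red_arc tT.
have : v \in red_tails u by rewrite -eq_tails inE.
rewrite inE => vu.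
move: tT uT; rewrite !mem_alt_trails => /and4P[_ _ uniq_t f_t] /and4P[_ _ uniq_u f_u].
have [k lt_k rot_k] := fcycle_rot_eq f_t f_u uniq_t uniq_u vt vu.
by apply/hasP; exists k; rewrite ?mem_iota ?rot_k.
Qed.

Lemma orbit_red_arc_in_alt_trails v :
  v \in moved -> orbit next_arc (red_arc v) \in alt_trails p1 p2.
Proof.
move=> v_moved; have v_orbit : red_arc v \in orbit next_arc (red_arc v).
  by rewrite -fconnect_orbit connect0.
rewrite mem_alt_trails orbit_uniq (cycle_orbit next_arc_inj) !andbT.
apply/andP; split; first by apply: contraTneq v_orbit => ->.
apply/allP => a; rewrite -fconnect_orbit => /iter_findex <-.
by elim: findex => [|n IH]; [rewrite is_arc_red_arc | exact: is_arc_next_arc].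
Qed.

Lemma A_altcycles_card : A_altcycles p1 p2 = #|porbit sigma @: moved|.
Proof.
rewrite /A_altcycles (size_undup_classes (F := red_tails)); last first.
  exact: rot_equiv_alt_trails.
rewrite -(card_uniqP (undup_uniq _)); apply: eq_card => X; rewrite mem_undup.
apply/mapP/imsetP => [[t tT ->] | [v v_moved ->]].
  have [v v_moved vt] := alt_trail_red_arc tT.
  move: tT; rewrite mem_alt_trails => /and4P[_ _ _ f_t].
  by exists v; rewrite // (red_tails_porbit f_t vt).
exists (orbit next_arc (red_arc v)); first exact: orbit_red_arc_in_alt_trails.
rewrite (red_tails_porbit (v := v) (cycle_orbit next_arc_inj _)) //.
by rewrite -fconnect_orbit connect0.
Qed.

Lemma N_nonisolated_card : N_nonisolated p1 p2 = #|moved|.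
Proof.
apply: eq_card => v; rewrite !inE; apply/existsP/idP => [[a] | v_moved]; last first.
  by exists (red_arc v); rewrite is_arc_red_arc inE v_moved /arc_tail eqxx.
rewrite /is_arc /inQ /arc_col /arc_tail /arc_head.
case: a => [[[] x y]] /= /andP[/andP[xy /eqP def_y] /orP[] /eqP <-]; subst.
- by rewrite eq_sym.
- by rewrite (inj_eq perm_inj) eq_sym.
- by rewrite same_moved (inj_eq perm_inj) eq_sym.
- by rewrite same_moved eq_sym.
Qed.

End AlternatingCycles.

Local Open Scope ring_scope.

Theorem proposition4 (m : nat) (p1 p2 : 'S_m) :
  (forall i : 'I_m, (p1 i == i) = (p2 i == i)) ->
  (d_trans p1 p2)%:Z = (N_nonisolated p1 p2)%:Z - (A_altcycles p1 p2)%:Z.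
Proof.
move=> same_fixed.
rewrite d_trans_porbits (N_nonisolated_card same_fixed) (A_altcycles_card same_fixed).
rewrite (card_porbits_fixed_out (sigma_fixed_out same_fixed)).
have := cardsC [set v | p1 v != v]; rewrite card_ord.
have := leq_imset_card (porbit (p1 * p2^-1)%g) [set v | p1 v != v].
lia.
Qed.
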